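(* Let $\mathcal{I}=([n],M,\mathcal{V})$ be an instance with additive valuations, $\epsilon\ge0$, and $(N',M',\mathcal{V})=\mathtt{reduce}(\mathcal{I},\epsilon)$. Let $r_4$ be the number of times $R^{3/4+\epsilon}_4$ is applied during $\mathtt{reduce}(\mathcal{I},\epsilon)$ and $G_4$ the set of goods removed by these applications. Then for every agent $i\in N'$, $\mathrm{MMS}^{n-r_4}_{v_i}(M\setminus G_4)\ge1-4\epsilon$, where $v_i$ denotes the valuation obtained after steps (1)–(2) of $\mathtt{reduce}$ and $M$ the full set of goods.
   Context: $\mathrm{MMS}^d_v(S)$ is the maximum over partitions of $S$ into $d$ bundles of the minimum bundle value under $v$; $\mathrm{MMS}_i=\mathrm{MMS}^n_{v_i}(M)$. An instance is ordered if $M=[m]$ and $v_i(1)\ge\dots\ge v_i(m)$ for all agents $i$. $\mathtt{order}(([n],[m],\mathcal{V}))$ replaces $v_i$ by $v'_i$ where $v'_i(j)$ is the $j$-th largest number of the multiset $\{v_i(g):g\in[m]\}$. Rules for an ordered instance with $n$ current agents and threshold $\alpha$: $R^\alpha_1$ applicable if some agent $i$ has $v_i(1)\ge\alpha$; $R^\alpha_2$ if some $i$ has $v_i(\{2n-1,2n,2n+1\})\ge\alpha$; $R^\alpha_3$ if some $i$ has $v_i(\{3n-2,\dots,3n+1\})\ge\alpha$; $R^\alpha_4$ if some $i$ has $v_i(\{1,2n+1\})\ge\alpha$; applying it gives that set to such an agent and removes agent and goods, re-indexing the remaining goods in their order. $\mathtt{reduce}(\mathcal{I},\epsilon)$: (1)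 replace $\mathcal{I}$ by $\mathtt{order}(\mathcal{I})$; (2) set $v_i(g)\leftarrow v_i(g)/\mathrm{MMS}_i$ for all agents $i$ and goods $g$ (so every $\mathrm{MMS}_i$ becomes 1); (3) while some $R^{3/4+\epsilon}_k$, $k\in[4]$, is applicable, apply it for the smallest applicable $k$; output the remaining agents, goods and valuations. *)

From HB Require Import structures.
From mathcomp Require Import all_boot all_order all_algebra.
Set Implicit Arguments. Unset Strict Implicit. Unset Printing Implicit Defensive.
Import Order.TTheory GRing.Theory Num.Theory.
Local Open Scope ring_scope.

Section Defs.
Variable R : realFieldType.

Definition bval (m : nat) (v : 'I_m -> R) (S : {set 'I_m}) : R :=
  \sum_(g in S) v g.

(* minimum bundle value of the partition of S into d bundles given by f
   (good g in S goes to bundle f g); bundles may be empty. *)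
Definition part_min (m d : nat) (v : 'I_m -> R) (S : {set 'I_m})
    (f : {ffun 'I_m -> 'I_d}) : R :=
  \big[Num.min/bval v S]_(k < d) bval v [set g in S | f g == k].

(* MMS^d_v(S): maximum over partitions of S into d bundles of the minimum
   bundle value (valuations are nonnegative, so 0 is a harmless identity). *)
Definition MMS (m d : nat) (v : 'I_m -> R) (S : {set 'I_m}) : R :=
  \big[Num.max/0]_(f : {ffun 'I_m -> 'I_d}) part_min v S f.

(* step (1): order -- v'_i(j) is the (j+1)-th largest value of v_i (0-based j) *)
Definition order_val (n m : nat) (v : 'I_n -> 'I_m -> R) (i : 'I_n) (j : 'I_m) : R :=
  nth 0 (sort (fun x y : R => y <= x) [seq v i g | g <- enum 'I_m]) j.

Definition norm_val (n m : nat) (v : 'I_n -> 'I_m -> R) (i : 'I_n) (j : 'I_m) : R :=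
  order_val v i j / MMS n (order_val v i) setT.

(* state of the reduction loop: remaining agents, remaining goods in order *)
Definition state (n m : nat) := ({set 'I_n} * seq 'I_m)%type.

(* goods at the given 1-based positions among the remaining goods gs *)
Definition pos_set (m : nat) (gs : seq 'I_m) (P : seq nat) : {set 'I_m} :=
  [set g : 'I_m | (g \in gs) && ((index g gs).+1 \in P)].

(* positions of the set used by rule R_k, c = current number of agents *)
Definition rule_pos (k c : nat) : seq nat :=
  match k with
  | 1 => [:: 1]
  | 2 => [:: (2 * c - 1)%N; (2 * c)%N; (2 * c + 1)%N]
  | 3 => [:: (3 * c - 2)%N; (3 * c - 1)%N; (3 * c)%N; (3 * c + 1)%N]
  | 4 => [:: 1; (2 * c + 1)%N]
  | _ => [::]
  end.

Definition rule_set (n m : nat) (s : state n m) (k : nat) : {set 'I_m} :=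
  pos_set s.2 (rule_pos k #|s.1|).

Definition applicable (n m : nat) (w : 'I_n -> 'I_m -> R) (alpha : R)
    (s : state n m) (k : nat) : Prop :=
  exists2 i, i \in s.1 & alpha <= bval (w i) (rule_set s k).

Definition step (n m : nat) (w : 'I_n -> 'I_m -> R) (alpha : R)
    (s : state n m) (k : nat) (i : 'I_n) (s' : state n m) : Prop :=
  [/\ (1 <= k <= 4)%N, i \in s.1, alpha <= bval (w i) (rule_set s k),
      (forall k', (1 <= k' < k)%N -> ~ applicable w alpha s k') &
      s' = (s.1 :\ i, [seq g <- s.2 | g \notin rule_set s k])].

Definition no_rule (n m : nat) (w : 'I_n -> 'I_m -> R) (alpha : R)
    (s : state n m) : Prop :=
  forall k, (1 <= k <= 4)%N -> ~ applicable w alpha s k.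

Inductive run (n m : nat) (w : 'I_n -> 'I_m -> R) (alpha : R) :
    state n m -> nat -> {set 'I_m} -> state n m -> Prop :=
| run_stop s : no_rule w alpha s -> run w alpha s 0 set0 s
| run_step s k i s' r G f :
    step w alpha s k i s' -> run w alpha s' r G f ->
    run w alpha s (if k == 4%N then r.+1 else r)
        (if k == 4%N then rule_set s k :|: G else G) f.

End Defs.

From mathcomp Require Import all_boot all_order all_algebra.
From mathcomp Require Import zify lra.
Set Implicit Arguments. Unset Strict Implicit. Unset Printing Implicit Defensive.
Import Order.TTheory GRing.Theory Num.Theory.

(* Fix a remaining agent i and an optimal partition of the ordered, normalized
   goods into n bundles, each of value at least 1.  Whenever R_4 fires, R_1 and
   R_2 are not applicable for i, so the first remaining good is worth less than
   a = 3/4 + eps and, the goods being ordered, the good at position 2c + 1 is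
   worth less than a/3.  Charging the first good 3 and the other one 1, every
   removed good is worth at most a/3 times its charge, and each application
   spreads a charge of 4 over at most two bundles.  Merging the groups of these
   bundles keeps the total charge of every group at most 4 per bundle minus 4;
   since a bundle of charge K keeps value at least (1 - 4 eps)(4 - K)/4, every
   group keeps value at least 1 - 4 eps.  Each application merges at most two
   groups, so at least n - r_4 groups survive, and pooling the surplus groups
   gives a partition into n - r_4 bundles. *)

Lemma subset_distinct_pair (T : finType) (L I : {set T}) :
  L \subset I -> #|L| <= 2 -> 1 < #|I| ->
  exists l1 l2, [/\ l1 \in I, l2 \in I, l1 != l2 & L \subset [set l1; l2]].
Proof.
move=> sLI cardL /card_gt1P[a [b [aI bI ab]]].
have [->|[x xL]] := set_0Vmem L; first by exists a, b; rewrite sub0set.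
have xI : x \in I := subsetP sLI x xL.
have [sLx|/subsetPn[y yL yx]] := boolP (L \subset [set x]).
  exists x, (if x == a then b else a); split => //; first by case: ifP.
    by case: ifP => [/eqP->|/negbT] //; rewrite eq_sym.
  by apply: subset_trans sLx _; rewrite sub1set !inE eqxx.
have xy : x != y by rewrite eq_sym -in_set1.
exists x, y; split => //; first exact: subsetP sLI y yL.
suff /eqP <- : [set x; y] == L by [].
rewrite eqEcard cards2 xy cardL andbT.
by apply/subsetP => z; rewrite !inE => /orP[]/eqP->.
Qed.

Section Grouping.
Variables (m n : nat) (bundle : 'I_m -> 'I_n).

Definition load (c : 'I_m -> nat) (j : 'I_n) : nat := \sum_(g | bundle g == j) c g.

Definition balanced (c : 'I_m -> nat) (h : 'I_n -> 'I_n) : Prop :=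
  forall k, k \in h @: setT ->
    \sum_(j | h j == k) load c j + 4 <= \sum_(j | h j == k) 4.

Definition merge (h : 'I_n -> 'I_n) (l1 l2 : 'I_n) (j : 'I_n) : 'I_n :=
  if h j == l2 then l1 else h j.

Lemma loadD c d j : load (fun g => c g + d g) j = load c j + load d j.
Proof. exact: big_split. Qed.

Lemma sum_load_le (Q : pred 'I_n) d : \sum_(j | Q j) load d j <= \sum_g d g.
Proof.
rewrite (partition_big bundle predT) //= [X in _ <= X](bigID Q) /=.
exact: leq_addr.
Qed.

Lemma merge_fiber h l1 l2 k j : k != l1 -> k != l2 ->
  (merge h l1 l2 j == k) = (h j == k).
Proof.
move=> k1 k2; rewrite /merge; case: ifP => [/eqP->|//].
by rewrite eq_sym (negbTE k1) eq_sym (negbTE k2).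
Qed.

Lemma sum_merge_fiber h l1 l2 (X : 'I_n -> nat) : l1 != l2 ->
  \sum_(j | merge h l1 l2 j == l1) X j =
  \sum_(j | h j == l1) X j + \sum_(j | h j == l2) X j.
Proof.
move=> l12; rewrite (bigID (fun j => h j == l2)) /= addnC /merge.
by congr (_ + _); apply: eq_bigl => j /=; case: (eqVneq (h j) l2) => [e|_];
  rewrite ?e ?eqxx ?andbT ?andbF // eq_sym (negbTE l12).
Qed.

Lemma card_merge h l1 l2 : l2 \in h @: setT ->
  #|h @: setT| - 1 <= #|merge h l1 l2 @: setT|.
Proof.
move=> l2I; rewrite (cardsD1 l2) l2I add1n subn1 /=.
apply/subset_leq_card/subsetP => l /setD1P[l2l /imsetP[j _ lE]].
by apply/imsetP; exists j; rewrite // /merge -lE (negbTE l2l).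
Qed.

Lemma merge_balanced c d h l1 l2 :
  balanced c h -> l1 \in h @: setT -> l2 \in h @: setT -> l1 != l2 ->
  \sum_g d g <= 4 -> (forall g, d g != 0 -> h (bundle g) \in [set l1; l2]) ->
  balanced (fun g => c g + d g) (merge h l1 l2).
Proof.
move=> bal l1I l2I l12 sd dsupp k /imsetP[j0 _ ->] {k}.
under eq_bigr do rewrite loadD; rewrite big_split /=.
have [->|k1] := eqVneq (merge h l1 l2 j0) l1.
  have := sum_load_le (fun j => merge h l1 l2 j == l1) d.
  rewrite !sum_merge_fiber //; have := bal _ l1I; have := bal _ l2I; lia.
have k2 : merge h l1 l2 j0 != l2.
  by move: k1; rewrite /merge; case: ifP => [_|/negbT].
have kI : merge h l1 l2 j0 \in h @: setT.
  by move: k1; rewrite /merge; case: ifP => // _ _; apply: imset_f.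
have fiber j : (merge h l1 l2 j == merge h l1 l2 j0) = (h j == merge h l1 l2 j0).
  exact: merge_fiber.
rewrite !(eq_bigl _ _ fiber) [X in _ + X + 4]big1 ?addn0; first exact: bal.
move=> j /eqP hj; apply: big1 => g /eqP bg; apply/eqP; apply: (contraNT (dsupp g)).
by rewrite bg hj !inE negb_or k1 k2.
Qed.

Lemma balanced_absorb c d h :
  balanced c h -> \sum_g d g <= 4 -> #|[set g | d g != 0]| <= 2 ->
  1 < #|h @: setT| ->
  exists h', balanced (fun g => c g + d g) h' /\ #|h @: setT| - 1 <= #|h' @: setT|.
Proof.
move=> bal sd supp2 groups2.
set L := h @: (bundle @: [set g | d g != 0]).
have sLI : L \subset h @: setT by apply: imsetS; apply: subsetT.
have cardL : #|L| <= 2 by do 2!apply: leq_trans (leq_imset_card _ _) _.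
have [l1 [l2 [l1I l2I l12 sL]]] := subset_distinct_pair sLI cardL groups2.
exists (merge h l1 l2); split; last exact: card_merge.
apply: merge_balanced => // g dg; apply: (subsetP sL).
by apply: imset_f; apply: imset_f; rewrite inE.
Qed.

End Grouping.

Local Open Scope ring_scope.

Section Valuation.
Variables (R : realFieldType) (m : nat) (v : 'I_m -> R).
Implicit Types S : {set 'I_m}.

Lemma part_min_ge d S (f : {ffun 'I_m -> 'I_d}) tau :
  tau <= bval v S -> (forall k, tau <= bval v [set g in S | f g == k]) ->
  tau <= part_min v S f.
Proof. by move=> tauS tauf; apply: le_bigmin. Qed.

Lemma part_min_le_bundle d S (f : {ffun 'I_m -> 'I_d}) k :
  part_min v S f <= bval v [set g in S | f g == k].
Proof. exact: bigmin_le. Qed.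

Lemma part_min_le_MMS d S (f : {ffun 'I_m -> 'I_d}) : part_min v S f <= MMS d v S.
Proof. exact: le_bigmax. Qed.

Lemma MMS_ge0 d S : 0 <= MMS d v S.
Proof. exact: bigmax_ge_id. Qed.

Hypothesis v_ge0 : forall g, 0 <= v g.

Lemma bval_ge0 S : 0 <= bval v S.
Proof. exact: sumr_ge0. Qed.

Lemma bval_sub (S T : {set 'I_m}) : S \subset T -> bval v S <= bval v T.
Proof.
move=> sST; rewrite /bval [X in _ <= X](bigID (mem S)) /=.
have -> : \sum_(g in T | g \in S) v g = \sum_(g in S) v g.
  by apply: eq_bigl => g; rewrite andbC; case gS: (g \in S); rewrite //= (subsetP sST).
by rewrite lerDl sumr_ge0.
Qed.

Lemma sum_le_bval (xs : seq 'I_m) (S : {set 'I_m}) :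
  uniq xs -> {subset xs <= S} -> \sum_(x <- xs) v x <= bval v S.
Proof.
move=> uxs sxs; rewrite big_uniq //.
have -> : \sum_(x in xs) v x = bval v [set x in xs] by apply: eq_bigl => x; rewrite inE.
by apply: bval_sub; apply/subsetP => x; rewrite inE; exact: sxs.
Qed.

Lemma MMS_attained d S :
  0 < MMS d v S -> exists f : {ffun 'I_m -> 'I_d}, MMS d v S = part_min v S f.
Proof.
move=> MMS_gt0; have [f _] : exists f : {ffun 'I_m -> 'I_d}, true.
  case: (pickP (predT : pred {ffun 'I_m -> 'I_d})) => [f|none]; first by exists f.
  by move: MMS_gt0; rewrite /MMS big_pred0 ?ltxx.
have part_min_ge0 (f' : {ffun 'I_m -> 'I_d}) : 0 <= part_min v S f'.
  exact: part_min_ge (bval_ge0 S) (fun=> bval_ge0 _).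
rewrite /MMS; have [f' _ ->] :=
  @eq_bigmax _ _ _ 0 f xpredT (part_min v S) isT (fun f' _ => part_min_ge0 f').
by exists f'.
Qed.

Lemma MMS_ge_labels (T : finType) (lab : 'I_m -> T) (L : {set T}) S d tau :
  (0 < d <= #|L|)%N -> (forall l, l \in L -> tau <= bval v [set g in S | lab g == l]) ->
  tau <= MMS d v S.
Proof.
case: d => [//|d] /= dL tauL.
pose f : {ffun 'I_m -> 'I_d.+1} := [ffun g => inord (minn (index (lab g) (enum L)) d)].
have tau_bundle k : tau <= bval v [set g in S | f g == k].
  have kL : (k < #|L|)%N := leq_trans (ltn_ord k) dL.
  pose l := enum_val (Ordinal kL).
  have lE : index l (enum L) = k.
    by rewrite /l (enum_val_nth (enum_val (Ordinal kL))) index_uniq ?enum_uniq -?cardE.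
  apply: le_trans (tauL l (enum_valP _)) (bval_sub _).
  apply/subsetP => g; rewrite !inE ffunE => /andP[-> /eqP->] /=; rewrite lE.
  by apply/eqP/val_inj; rewrite /= inordK ?ltnS ?geq_minr // (minn_idPl _) // -ltnS.
apply: le_trans _ (part_min_le_MMS S f); apply: part_min_ge => //.
by apply: le_trans (tau_bundle ord0) (bval_sub _); apply/subsetP => g; rewrite inE => /andP[].
Qed.

End Valuation.

Lemma MMS_reindex_ge (R : realFieldType) m d (v w : 'I_m -> R) (s : 'I_m -> 'I_m) :
  injective s -> (forall j, w j = v (s j)) -> MMS d v setT <= MMS d w setT.
Proof.
move=> s_inj wE.
have bvalE (X : {set 'I_m}) : bval w [set j | s j \in X] = bval v X.
  by rewrite /bval [RHS](reindex_inj s_inj); apply: eq_big => j; rewrite ?inE ?wE.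
apply: bigmax_le => [|f _]; first exact: MMS_ge0.
apply: (bigmax_sup [ffun j => f (s j)]) => //; rewrite /part_min.
have -> : bval w setT = bval v setT by rewrite -bvalE; congr bval; apply/setP => j; rewrite !inE.
rewrite le_eqVlt; apply/orP; left; apply/eqP; apply: eq_bigr => k _.
by rewrite -bvalE; congr bval; apply/setP => j; rewrite !inE ffunE.
Qed.

Section Ordered.
Variables (R : realFieldType) (n m : nat) (v : 'I_n -> 'I_m -> R) (i : 'I_n).

Let values := sort (fun x y : R => y <= x) [seq v i g | g <- enum 'I_m].

Lemma size_values : size values = m.
Proof. by rewrite size_sort size_map size_enum_ord. Qed.

Lemma order_val_perm :
  exists2 s : 'I_m -> 'I_m, injective s & forall j, order_val v i j = v i (s j).
Proof.
have /(perm_iotaP 0)[Is pIs valuesE] : perm_eq values [seq v i g | g <- enum 'I_m].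
  by rewrite perm_sort.
have sizeIs : size Is = m by rewrite (perm_size pIs) size_iota size_map size_enum_ord.
have Is_lt (j : 'I_m) : (nth 0 Is j < m)%N.
  have := mem_nth 0%N (_ : (j < size Is)%N); rewrite sizeIs => /(_ (ltn_ord j)).
  by rewrite (perm_mem pIs) mem_iota size_map size_enum_ord.
exists (fun j => Ordinal (Is_lt j)).
  move=> j1 j2 /(congr1 val) /= /eqP; rewrite nth_uniq ?sizeIs //.
    by move/eqP/val_inj.
  by rewrite (perm_uniq pIs) iota_uniq.
move=> j; rewrite /order_val -/values valuesE (nth_map 0%N) ?sizeIs //.
rewrite (nth_map j) ?size_enum_ord ?Is_lt //; congr (v i _).
by apply: val_inj; rewrite /= nth_enum_ord ?Is_lt.
Qed.

Lemma order_val_noninc (j j' : 'I_m) : (j <= j')%N -> order_val v i j' <= order_val v i j.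
Proof.
move=> le_jj'; rewrite /order_val -/values.
have sorted_values : sorted (fun x y : R => y <= x) values.
  by apply: sort_sorted => x y; rewrite le_total.
apply: (sorted_leq_nth _ _ _ sorted_values); rewrite ?inE ?size_values //.
by move=> y x z /= yx zy; apply: le_trans zy yx.
Qed.

Lemma MMS_le_order_val : MMS n (v i) setT <= MMS n (order_val v i) setT.
Proof. by have [s s_inj sE] := order_val_perm; exact: MMS_reindex_ge sE. Qed.

Hypothesis v_ge0 : forall g, 0 <= v i g.

Lemma order_val_ge0 j : 0 <= order_val v i j.
Proof. by have [s _ ->] := order_val_perm. Qed.

Lemma norm_val_ge0 g : 0 <= norm_val v i g.
Proof. exact: divr_ge0 (order_val_ge0 g) (MMS_ge0 _ _ _). Qed.

Lemma norm_val_noninc (g g' : 'I_m) : (g <= g')%N -> norm_val v i g' <= norm_val v i g.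
Proof. by move=> le_gg'; rewrite ler_wpM2r ?invr_ge0 ?MMS_ge0 ?order_val_noninc. Qed.

Lemma norm_val_unit_bundles : 0 < MMS n (v i) setT ->
  exists f : {ffun 'I_m -> 'I_n}, forall j, 1 <= bval (norm_val v i) [set g | f g == j].
Proof.
move=> /lt_le_trans/(_ MMS_le_order_val) mu_gt0.
have [f fE] := MMS_attained order_val_ge0 mu_gt0.
exists f => j; rewrite /bval /norm_val -mulr_suml ler_pdivlMr // mul1r fE.
apply: le_trans (part_min_le_bundle _ _ _ j) _; rewrite le_eqVlt; apply/orP; left; apply/eqP.
by apply: eq_bigl => g; rewrite !inE.
Qed.

End Ordered.

Lemma card_pos_set1 m (gs : seq 'I_m) p : (#|pos_set gs [:: p]| <= 1)%N.
Proof.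
apply/card_le1_eqP => x y; rewrite !inE => /andP[xs /eqP ix] /andP[ys /eqP iy].
by rewrite -(nth_index x xs) -(nth_index x ys); congr nth; apply: succn_inj; rewrite ix iy.
Qed.

Section Rules.
Variables (R : realFieldType) (n m : nat) (W : 'I_n -> 'I_m -> R) (alpha : R) (i : 'I_n).
Hypotheses (W_ge0 : forall g, 0 <= W i g)
  (W_noninc : forall g g' : 'I_m, (g <= g')%N -> W i g' <= W i g).

Lemma rule_val_lt (s : state n m) k :
  i \in s.1 -> ~ applicable W alpha s k -> bval (W i) (rule_set s k) < alpha.
Proof. by move=> iS NA; rewrite ltNge; apply/negP => ge; apply: NA; exists i. Qed.

Lemma first_good_le (s : state n m) g : i \in s.1 -> ~ applicable W alpha s 1 ->
  g \in pos_set s.2 [:: 1%N] -> W i g <= alpha.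
Proof.
move=> iS NA gA; apply/ltW/(le_lt_trans _ (rule_val_lt iS NA)).
have -> : W i g = \sum_(x <- [:: g]) W i x by rewrite big_seq1.
by apply: sum_le_bval => // x; rewrite inE => /eqP->.
Qed.

(* Positions in [pos_set] start at 1, indices of [nth] at 0. *)
Lemma window3_ge (gs : seq 'I_m) k x0 :
  sorted (relpre val ltn) gs -> (1 < k)%N -> (k < size gs)%N ->
  3 * W i (nth x0 gs k) <= bval (W i) (pos_set gs [:: k - 1; k; k + 1]%N).
Proof.
move=> sorted_gs k_gt1 k_lt.
have uniq_gs : uniq gs.
  by apply: sorted_uniq sorted_gs => [y x z|x] /=; [exact: ltn_trans | exact: ltnn].
pose ts := [:: k - 2; k - 1; k]%N.
have ts_lt t : t \in ts -> (t < size gs)%N by rewrite !inE => /or3P[]/eqP->; lia.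
have ts_le t : t \in ts -> (t <= k)%N by rewrite !inE => /or3P[]/eqP->; lia.
have ge_k t : t \in ts -> W i (nth x0 gs k) <= W i (nth x0 gs t).
  move=> tts; apply: W_noninc.
  have sorted_le : sorted (relpre val leq) gs by apply: sub_sorted sorted_gs => x y /ltnW.
  apply: (sorted_leq_nth _ _ _ sorted_le); rewrite ?inE ?ts_lt ?ts_le //.
  - by move=> y x z /=; apply: leq_trans.
  - by move=> x /=.
  - by rewrite !inE eqxx !orbT.
have uniq_ts : uniq [seq nth x0 gs t | t <- ts].
  rewrite map_inj_in_uniq /= ?inE; first lia.
  by move=> a b /ts_lt a_lt /ts_lt b_lt /(congr1 (index^~ gs)); rewrite !index_uniq.
have sub_window : {subset [seq nth x0 gs t | t <- ts] <= pos_set gs [:: k - 1; k; k + 1]%N}.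
  move=> x /mapP[u uts ->]; rewrite !inE mem_nth ?ts_lt // index_uniq ?ts_lt //=.
  by move: uts; rewrite !inE => /or3P[]/eqP->; lia.
have := sum_le_bval W_ge0 uniq_ts sub_window; rewrite big_map !big_cons big_nil.
have := ge_k _ (mem_head _ _); have := ge_k (k - 1)%N; have := ge_k k.
rewrite !inE !eqxx !orbT /=; lra.
Qed.

Lemma good_2c1_le (s : state n m) g : i \in s.1 -> ~ applicable W alpha s 2 ->
  sorted (relpre val ltn) s.2 -> g \in pos_set s.2 [:: (2 * #|s.1| + 1)%N] ->
  3 * W i g <= alpha.
Proof.
move=> iS NA sorted_s; rewrite !inE => /andP[gs /eqP gpos].
have := rule_val_lt iS NA; rewrite /rule_set /=.
have : (0 < #|s.1|)%N by apply/card_gt0P; exists i.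
move: #|s.1| gpos => c gpos c_gt0 rule2_lt.
have gE : nth g s.2 (index g s.2) = g by rewrite nth_index.
have k_lt : (index g s.2 < size s.2)%N by rewrite index_mem.
move: (index g s.2) gpos gE k_lt => k gpos gE k_lt.
have k_gt1 : (1 < k)%N by lia.
have := window3_ge g sorted_s k_gt1 k_lt; rewrite gE (_ : k = 2 * c)%N; last by lia.
by move=> window; exact: ltW (le_lt_trans window rule2_lt).
Qed.

Lemma rule4_charge (s : state n m) : 0 <= alpha ->
  i \in s.1 -> ~ applicable W alpha s 1 -> ~ applicable W alpha s 2 ->
  sorted (relpre val ltn) s.2 ->
  exists d : 'I_m -> nat, [/\ (\sum_g d g <= 4)%N, (#|[set g | d g != 0%N]| <= 2)%N &
    forall g, g \in rule_set s 4 -> 3 * W i g <= alpha * (d g)%:R].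
Proof.
move=> alpha_ge0 iS NA1 NA2 sorted_s.
set A := pos_set s.2 [:: 1%N]; set B := pos_set s.2 [:: (2 * #|s.1| + 1)%N].
have cardA := card_pos_set1 s.2 1; have cardB := card_pos_set1 s.2 (2 * #|s.1| + 1).
pose d g := (3 * (g \in A) + (g \in B))%N; exists d; split.
- have sum_mem (X : {set 'I_m}) : (\sum_g (g \in X) = #|X|)%N.
    by rewrite -sum1_card [RHS]big_mkcond; apply: eq_bigr => g _; case: (g \in X).
  by rewrite /d big_split -big_distrr /= !sum_mem (leq_add (leq_mul (leqnn 3) cardA) cardB).
- apply: leq_trans (subset_leq_card (_ : _ \subset A :|: B)) _.
    by apply/subsetP => g; rewrite in_set in_setU /d; case: (g \in A); case: (g \in B).
  exact: leq_trans (leq_card_setU A B).1 (leq_add cardA cardB).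
move=> g; rewrite /rule_set /= -/(pos_set s.2 [:: 1%N; (2 * #|s.1| + 1)%N]).
have -> : pos_set s.2 [:: 1%N; (2 * #|s.1| + 1)%N] = A :|: B.
  by apply/setP => x; rewrite !inE andb_orr.
rewrite inE => /orP[gA|gB].
- have d_ge3 : 3 <= (d g)%:R :> R by rewrite ler_nat /d gA leq_addr.
  by have := first_good_le iS NA1 gA; nra.
- have d_ge1 : 1 <= (d g)%:R :> R by rewrite ler1n /d gB addn1.
  by have := good_2c1_le iS NA2 sorted_s gB; nra.
Qed.

End Rules.

Section Run.
Variables (R : realFieldType) (n m : nat) (W : 'I_n -> 'I_m -> R) (alpha : R).

Lemma run_agents s r G f :
  run W alpha s r G f -> f.1 \subset s.1 /\ (r + #|f.1| <= #|s.1|)%N.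
Proof.
elim => [s0 _|s0 k i0 s' r0 G0 f0 [_ i0S _ _ ->] _ /= [sub count]].
  by rewrite subxx.
have cardD : #|s0.1 :\ i0| = (#|s0.1| - 1)%N by rewrite (cardsD1 i0 s0.1) i0S add1n subn1.
have c_gt0 : (0 < #|s0.1|)%N by apply/card_gt0P; exists i0.
split; first exact: subset_trans sub (subsetDl _ _).
by move: count c_gt0; rewrite cardD; move: #|s0.1| => c; case: (k == 4%N); lia.
Qed.

Variables (bundle : 'I_m -> 'I_n) (i : 'I_n).
Hypotheses (W_ge0 : forall g, 0 <= W i g)
  (W_noninc : forall g g' : 'I_m, (g <= g')%N -> W i g' <= W i g).

Lemma run_charged s r G f : 0 <= alpha ->
  run W alpha s r G f -> i \in f.1 -> sorted (relpre val ltn) s.2 ->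
  exists c h, [/\ forall g, g \in G -> 3 * W i g <= alpha * (c g)%:R,
    balanced bundle c h & (n - r <= #|h @: setT|)%N].
Proof.
move=> alpha_ge0; elim => [s0 _|s0 k i0 s' r0 G0 f0 st run' IH] iF sorted_s.
  exists (fun=> 0%N), id; split.
  - by move=> g; rewrite inE.
  - by move=> k _; rewrite !big_pred1_eq /load big1.
  - by rewrite imset_id cardsT card_ord subn0.
case: st => _ i0S _ NA s'E.
have sorted_s' : sorted (relpre val ltn) s'.2.
  by rewrite s'E; apply: sorted_filter sorted_s => y x z; exact: ltn_trans.
have [c [h [Gc bal groups]]] := IH iF sorted_s'.
have [/subsetP sub count] := run_agents run'.
have [k4|_] := eqVneq k 4%N; last by exists c, h.
subst k.
have iS : i \in s0.1 by move: (sub i iF); rewrite s'E inE => /andP[].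
have [d [sum_d supp_d Wd]] :=
  rule4_charge W_ge0 W_noninc alpha_ge0 iS (NA 1%N isT) (NA 2%N isT) sorted_s.
have groups2 : (1 < #|h @: setT|)%N.
  have s0_le : (#|s0.1| <= n)%N by rewrite -[X in (_ <= X)%N]card_ord max_card.
  have f0_gt0 : (0 < #|f0.1|)%N by apply/card_gt0P; exists i.
  move: count groups s0_le f0_gt0; rewrite s'E /= (cardsD1 i0 s0.1) i0S.
  by rewrite add1n; move: #|s0.1 :\ i0| #|f0.1| #|h @: _| => a b e; lia.
have [h' [bal' groups']] := balanced_absorb bal sum_d supp_d groups2.
exists (fun g => c g + d g)%N, h'; split => //; last by lia.
move=> g; rewrite inE natrD mulrDr => /orP[/Wd|/Gc] Wg.
- by apply: le_trans Wg _; rewrite lerDr mulr_ge0.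
- by apply: le_trans Wg _; rewrite lerDl mulr_ge0.
Qed.

End Run.

Section Remaining.
Variables (R : realFieldType) (m n : nat) (w : 'I_m -> R) (bundle : 'I_m -> 'I_n).
Variables (eps : R) (G : {set 'I_m}) (c : 'I_m -> nat).
Hypotheses (w_ge0 : forall g, 0 <= w g) (eps_ge0 : 0 <= eps) (eps_le : 0 <= 1 - 4 * eps)
  (bundle_ge1 : forall j, 1 <= bval w [set g | bundle g == j])
  (G_charge : forall g, g \in G -> 3 * w g <= (3 / 4 + eps) * (c g)%:R).

(* A load K <= 3 leaves a rest of at least 1 - (3/4 + eps) K / 3; for K >= 4
   the left-hand side is not positive. *)
Lemma bundle_rest_ge j :
  (1 - 4 * eps) * (4 - (load bundle c j)%:R) <= 4 * bval w [set g in ~: G | bundle g == j].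
Proof.
set removed := \sum_(g | (bundle g == j) && (g \in G)) w g.
have bundleE : bval w [set g | bundle g == j] = bval w [set g in ~: G | bundle g == j] + removed.
  rewrite /bval (bigID (mem G)) /= addrC; congr (_ + _); apply: eq_bigl => g; rewrite !inE //.
  by rewrite andbC.
have removed_le : 3 * removed <= (3 / 4 + eps) * (load bundle c j)%:R.
  have load_ge : (\sum_(g | (bundle g == j) && (g \in G)) c g <= load bundle c j)%N.
    by rewrite /load [X in (_ <= X)%N](bigID (mem G)) leq_addr.
  rewrite mulr_sumr; apply: le_trans (ler_sum _ (fun g gG => G_charge (andP gG).2)) _.
  have alpha_ge0 : 0 <= 3 / 4 + eps :> R by move: eps_ge0; lra.
  by rewrite -mulr_sumr -natr_sum ler_wpM2l ?ler_nat.
have := bundle_ge1 j; rewrite bundleE.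
have rest_ge0 := bval_ge0 w_ge0 [set g in ~: G | bundle g == j].
have [K_le3|K_ge4] := leqP (load bundle c j) 3.
- have : (load bundle c j)%:R <= 3 :> R by rewrite ler_nat.
  by move: removed_le (ler0n R (load bundle c j)) eps_ge0; nra.
- have : 4 <= (load bundle c j)%:R :> R by rewrite ler_nat.
  by move: eps_le; nra.
Qed.

Lemma group_rest_ge h l : balanced bundle c h -> l \in h @: setT ->
  1 - 4 * eps <= bval w [set g in ~: G | h (bundle g) == l].
Proof.
move=> bal lI.
have groupE : bval w [set g in ~: G | h (bundle g) == l] =
    \sum_(j | h j == l) bval w [set g in ~: G | bundle g == j].
  rewrite /bval (partition_big bundle (fun j => h j == l)) /=; last first.
    by move=> g; rewrite inE => /andP[].
  apply: eq_bigr => j /eqP hj; apply: eq_bigl => g; rewrite !inE.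
  by case: (eqVneq (bundle g) j) => [e|_]; rewrite ?e ?hj ?eqxx ?andbT ?andbF.
have slack : 4 <= \sum_(j | h j == l) (4 - (load bundle c j)%:R) :> R.
  rewrite sumrB; have := bal l lI; rewrite -(ler_nat R) natrD !natr_sum; lra.
have : \sum_(j | h j == l) (1 - 4 * eps) * (4 - (load bundle c j)%:R) <=
    \sum_(j | h j == l) 4 * bval w [set g in ~: G | bundle g == j].
  by apply: ler_sum => j _; exact: bundle_rest_ge.
by rewrite -!mulr_sumr -groupE; move: slack eps_le; nra.
Qed.

End Remaining.

Lemma sorted_enum_ord m : sorted (relpre val ltn) (enum 'I_m).
Proof. by rewrite -sorted_map val_enum_ord iota_ltn_sorted. Qed.

Theorem lemma18 (R : realFieldType) (n m : nat) (v : 'I_n -> 'I_m -> R) (eps : R) :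
  (forall i g, 0 <= v i g) ->
  (forall i, 0 < MMS n (v i) setT) ->
  0 <= eps ->
  forall (Nf : {set 'I_n}) (Mf : seq 'I_m) (r4 : nat) (G4 : {set 'I_m}),
    run (norm_val v) (3 / 4 + eps) ([set: 'I_n], enum 'I_m) r4 G4 (Nf, Mf) ->
    forall i, i \in Nf ->
      1 - 4 * eps <= MMS (n - r4) (norm_val v i) (~: G4).
Proof.
move=> v_ge0 MMS_gt0 eps_ge0 Nf Mf r4 G4 reduce_run i iN.
have [eps_big|eps_small] := lerP (1 - 4 * eps) 0.
  exact: le_trans eps_big (MMS_ge0 _ _ _).
have w_ge0 := norm_val_ge0 (v_ge0 i).
have [f bundle_ge1] := norm_val_unit_bundles (v_ge0 i) (MMS_gt0 i).
have alpha_ge0 : 0 <= 3 / 4 + eps by lra.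
have [c [h [G_charge bal groups]]] := run_charged f w_ge0 (norm_val_noninc v i)
  alpha_ge0 reduce_run iN (sorted_enum_ord m).
have [_ /= count] := run_agents reduce_run.
have d_gt0 : (0 < n - r4)%N.
  have : (0 < #|Nf|)%N by apply/card_gt0P; exists i.
  by move: count; rewrite cardsT card_ord; move: #|Nf| => k; lia.
apply: (MMS_ge_labels w_ge0 (lab := fun g => h (f g)) (L := h @: setT)); first by rewrite d_gt0.
by move=> l lI; apply: (group_rest_ge w_ge0 eps_ge0 (ltW eps_small) bundle_ge1 G_charge bal lI).
Qed.
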